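(* Let $X$ be an integral regular projective curve of genus $g$ over $\mathbb{F}_q$ and $\mathbf{n}_m$ a tuple of positive integers; write $Q=q_{\mathbf{n}_m}$. Let $P(T)=(1-T)(1-QT)T^{g-1}\widehat Z^{(\mathbf{n}_m)}_X(T)$, a polynomial of degree $2g$ in $T=T_{\mathbf{n}_m}$, assume $P(0)\neq0$, and write its reciprocal roots as $\alpha_1,\dots,\alpha_g,\beta_1,\dots,\beta_g$, i.e. $P(T)=P(0)\prod_{\ell=1}^g(1-\alpha_\ell T)(1-\beta_\ell T)$. Put $N_k=Q^k+1-\sum_{\ell=1}^g(\alpha_\ell^k+\beta_\ell^k)$ and define $b_k$ by $\exp\bigl(\sum_{k\ge1}\frac{N_k}{Q^k-1}\frac{x^k}{k}\bigr)=\sum_{k\ge0}b_kx^k$. Then, with $(Q;Q)_n=\prod_{j=1}^n(1-Q^j)$, $$b_k=\sum_{\substack{k_{0+},k_{0-},k_{1+},k_{1-},\dots,k_{g+},k_{g-}\ge0\\ k_{0+}+k_{0-}+\cdots+k_{g+}+k_{g-}=k}}\frac{(-1)^{k_{0+}+k_{0-}}Q^{\binom{k_{0+}+1}{2}+\binom{k_{0-}}{2}}}{(Q;Q)_{k_{0+}}(Q;Q)_{k_{0-}}}\prod_{\ell=1}^g\frac{\alpha_\ell^{k_{\ell+}}\beta_\ell^{k_{\ell-}}}{(Q;Q)_{k_{\ell+}}(Q;Q)_{k_{\ell-}}}.$$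
   Context: Let $\zeta_X(s)=\sum_{D\ge 0}N(D)^{-s}$ be the Artin zeta function of $X$ ($D$ running over effective divisors) and $\widehat\zeta_X(s)=q^{s(g-1)}\zeta_X(s)$ the complete Artin zeta function, a rational function of $q^{-s}$. Derived zeta functions are defined recursively. For the empty tuple $\mathbf{n}_{-1}=()$ put $q_{\mathbf{n}_{-1}}=q$, $T_{\mathbf{n}_{-1}}=q^{-s}$, $\widehat\zeta^{(\mathbf{n}_{-1})}_X=\widehat\zeta_X$. For a tuple $\mathbf{n}_m=(n_0,\dots,n_m)$ of positive integers ($m\ge 0$) put $\mathbf{n}_{m-1}=(n_0,\dots,n_{m-1})$, $q_{\mathbf{n}_m}=q^{n_0n_1\cdots n_m}$, $T_{\mathbf{n}_m}=q^{-n_0n_1\cdots n_m s}$. Writing $\widehat Z^{(\mathbf{n}_{m-1})}_X(T_{\mathbf{n}_{m-1}}):=\widehat\zeta^{(\mathbf{n}_{m-1})}_X(s)$ (a rational function of $T_{\mathbf{n}_{m-1}}$), set $\widehat\zeta^{(\mathbf{n}_{m-1})}_X(1):=\operatorname{Res}_{T_{\mathbf{n}_{m-1}}=1}\widehat Z^{(\mathbf{n}_{m-1})}_X(T_{\mathbf{n}_{m-1}})$ and for integers $N\ge 1$, $\widehat v_N:=\prod_{k=1}^{N}\widehat\zeta^{(\mathbf{n}_{m-1})}_X(k)$. Then $$\widehat\zeta^{(\mathbf{n}_m)}_X(s)=q_{\mathbf{n}_{m-1}}^{\binom{n_m}{2}(g-1)}\sum_{a=1}^{n_m}\Biggl(\sum_{\substack{k_1,\dots,k_p>0\\k_1+\cdots+k_p=n_m-a}}\frac{\widehat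 v_{k_1}\cdots\widehat v_{k_p}}{\prod_{j=1}^{p-1}(1-q_{\mathbf{n}_{m-1}}^{k_j+k_{j+1}})}\cdot\frac{1}{1-q_{\mathbf{n}_{m-1}}^{n_ms-n_m+a+k_p}}\Biggr)\widehat\zeta^{(\mathbf{n}_{m-1})}_X(n_ms-n_m+a)\Biggl(\sum_{\substack{l_1,\dots,l_r>0\\l_1+\cdots+l_r=a-1}}\frac{1}{1-q_{\mathbf{n}_{m-1}}^{-n_ms+n_m-a+1+l_1}}\cdot\frac{\widehat v_{l_1}\cdots\widehat v_{l_r}}{\prod_{j=1}^{r-1}(1-q_{\mathbf{n}_{m-1}}^{l_j+l_{j+1}})}\Biggr),$$ where the inner sums run over ordered tuples of positive integers (of any length) with the indicated sum, and an inner sum over tuples summing to $0$ is defined to be $1$. One writes $\widehat Z^{(\mathbf{n}_m)}_X(T_{\mathbf{n}_m}):=\widehat\zeta^{(\mathbf{n}_m)}_X(s)$, a rational function of $T_{\mathbf{n}_m}$. (For $m=0$ this is the rank $n_0$ non-abelian zeta function.) *)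

From mathcomp Require Import all_boot all_order all_algebra all_field.
Set Implicit Arguments. Unset Strict Implicit. Unset Printing Implicit Defensive.
Import Order.TTheory GRing.Theory Num.Theory.
Local Open Scope ring_scope.

Definition qpoch (Q : algC) (n : nat) : algC :=
  \prod_(1 <= j < n.+1) (1 - Q ^+ j).

Definition Nk (Q : algC) (g : nat) (alpha beta : 'I_g -> algC) (k : nat) : algC :=
  Q ^+ k + 1 - \sum_(l < g) (alpha l ^+ k + beta l ^+ k).

Definition exp_arg (Q : algC) (g : nat) (alpha beta : 'I_g -> algC) (K : nat)
  : {poly algC} :=
  \sum_(1 <= i < K.+1) ((Nk Q alpha beta i / (Q ^+ i - 1)) / i%:R) *: 'X^i.

(* b_K = coefficient of x^K in the formal power series exp(A(x)) =
   sum_j A(x)^j / j!; since A has no constant term, only j <= K and the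
   terms of A of degree <= K contribute. *)
Definition bcoef (Q : algC) (g : nat) (alpha beta : 'I_g -> algC) (K : nat) : algC :=
  (\sum_(j < K.+1) (j`!%:R)^-1 *: (exp_arg Q alpha beta K) ^+ j)`_K.

(* An index tuple (k_{0+},k_{0-},...,k_{g+},k_{g-}) is a
   finite function f : 'I_g.+1 * bool -> 'I_K.+1, with f (l,true) = k_{l+} and
   f (l,false) = k_{l-}; l = 0 is the special index, and alpha_l, beta_l
   (l = 1..g) are alpha (l-1), beta (l-1), i.e. index lift ord0 l. *)
Definition bterm (Q : algC) (g : nat) (alpha beta : 'I_g -> algC) (K : nat)
  (f : {ffun 'I_g.+1 * bool -> 'I_K.+1}) : algC :=
  let kp (l : 'I_g.+1) : nat := f (l, true) in
  let km (l : 'I_g.+1) : nat := f (l, false) in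
  (-1) ^+ (kp ord0 + km ord0) * Q ^+ ('C(kp ord0 + 1, 2) + 'C(km ord0, 2))
    / (qpoch Q (kp ord0) * qpoch Q (km ord0))
  * \prod_(l < g) (alpha l ^+ kp (lift ord0 l) * beta l ^+ km (lift ord0 l)
                    / (qpoch Q (kp (lift ord0 l)) * qpoch Q (km (lift ord0 l)))).

Definition bsum (Q : algC) (g : nat) (alpha beta : 'I_g -> algC) (K : nat) : algC :=
  \sum_(f : {ffun 'I_g.+1 * bool -> 'I_K.+1} | (\sum_i (f i : nat))%N == K)
     bterm Q alpha beta f.

From mathcomp Require Import all_boot all_order all_algebra all_field.
From mathcomp Require Import ring zify.
Set Implicit Arguments. Unset Strict Implicit. Unset Printing Implicit Defensive.
Import GRing.Theory Num.Theory.
Local Open Scope ring_scope.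

(* The exponent splits as
     sum_k N_k/(Q^k-1) x^k/k = L_Q(Q) + L_Q(1) - sum_l (L_Q(alpha_l) + L_Q(beta_l)),
   with L_Q(c) = sum_k c^k x^k / (k (Q^k - 1)). The series E with coefficients
   (-1)^n c^n Q^C(n,2) / (Q;Q)_n satisfies (Q^(n+1) - 1) e_(n+1) = c Q^n e_n, and
   this recurrence is equivalent to E' = L_Q(c)' E, i.e. E = exp L_Q(c);
   likewise sum c^n/(Q;Q)_n x^n = exp (- L_Q(c)), being the previous series for
   (1/Q, c/Q). Hence exp of the exponent is a product of 2g + 2 such series and
   b_k is the coefficient of x^k of that product, which is the stated sum.
   All identities are checked modulo x^(k+1) through the uniqueness of solutions
   of F' = A' F with F(0) = 1. *)

Lemma big_pair_bool (R : Type) (idx : R) (op : Monoid.com_law idx)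
    (I : finType) (G : I * bool -> R) :
  \big[op/idx]_(x : I * bool) G x = \big[op/idx]_(i : I) op (G (i, true)) (G (i, false)).
Proof.
rewrite -(eq_bigr _ (fun i _ => big_bool _ (fun b => G (i, b)))) pair_big.
by apply: eq_big => // -[].
Qed.

Lemma coef_prod_poly (R : comNzRingType) (I : finType) K (E : I -> nat -> R) :
  (\prod_i \poly_(j < K.+1) E i j)`_K =
  \sum_(f : {ffun I -> 'I_K.+1} | (\sum_i (f i : nat))%N == K) \prod_i E i (f i).
Proof.
under eq_bigr do rewrite poly_def.
rewrite bigA_distr_bigA coef_sum [RHS]big_mkcond /=; apply: eq_bigr => f _.
under eq_bigr do rewrite -mul_polyC.
rewrite big_split /= -rmorph_prod -(big_morph _ (exprD 'X) (expr0 'X)).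
by rewrite coefCM coefXn eq_sym; case: eqP; rewrite ?mulr1 ?mulr0.
Qed.

Section ExpOde.
Variable R : numFieldType.
Implicit Types p q F G : {poly R}.

(* The equation F' = p' F in degrees < K: with F(0) = 1 it characterises
   exp p modulo x^(K+1). *)
Definition exp_ode K p F := forall n, (n < K)%N -> F^`()`_n = (p^`() * F)`_n.

Lemma coefM_eql K (A B : {poly R}) :
  (forall i, (i < K)%N -> A`_i = B`_i) ->
  forall C n, (n < K)%N -> (A * C)`_n = (B * C)`_n.
Proof.
move=> eqAB C n nK; rewrite !coefM; apply: eq_bigr => i _.
by rewrite eqAB //; apply: leq_ltn_trans nK; rewrite -ltnS.
Qed.

Lemma exp_ode_uniq K p F G : exp_ode K p F -> exp_ode K p G -> F`_0 = G`_0 ->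
  forall n, (n <= K)%N -> F`_n = G`_n.
Proof.
move=> odeF odeG eq0; elim/ltn_ind => -[// | n] IH nK.
apply: (@pmulrnI _ n.+1) => //.
rewrite -!coef_deriv odeF // odeG // !coefM; apply: eq_bigr => i _.
by rewrite IH //; lia.
Qed.

Lemma exp_odeM K p q F G : exp_ode K p F -> exp_ode K q G -> exp_ode K (p + q) (F * G).
Proof.
move=> odeF odeG n nK.
rewrite derivM coefD (coefM_eql odeF) // [F * _]mulrC (coefM_eql odeG) // -coefD.
by rewrite derivD mulrDl -!mulrA [G * F]mulrC.
Qed.

Lemma exp_ode_prod K (I : finType) (ps Fs : I -> {poly R}) :
  (forall i, exp_ode K (ps i) (Fs i)) -> exp_ode K (\sum_i ps i) (\prod_i Fs i).
Proof.
move=> odeI; apply: (big_rec2 (fun F p => exp_ode K p F)).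
  by move=> n _; rewrite -polyC1 derivC !raddf0 mul0r.
by move=> i F p _; apply: exp_odeM.
Qed.

Lemma coef_expr_lt p k n : p`_0 = 0 -> (n < k)%N -> (p ^+ k)`_n = 0.
Proof.
move=> p0; elim: k n => [//|k IH] n nk.
rewrite exprS coefM big1 // => -[[|i] ilt] _ /=; first by rewrite p0 mul0r.
by rewrite IH ?mulr0 //; lia.
Qed.

Definition texp K p := \sum_(j < K.+1) (j`!%:R)^-1 *: p ^+ j.

Lemma deriv_texpS K p : (texp K.+1 p)^`() = p^`() * texp K p.
Proof.
rewrite /texp (big_morph _ (@derivD _) (@deriv0 _)) big_ord_recl.
rewrite derivZ expr0 -polyC1 derivC scaler0 add0r mulr_sumr.
apply: eq_bigr => i _; rewrite lift0 derivZ deriv_exp -scaler_nat scalerA -scalerAr.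
by rewrite factS natrM invfM mulrAC mulVf ?mul1r // pnatr_eq0.
Qed.

Lemma exp_ode_texp K p : p`_0 = 0 -> exp_ode K p (texp K p).
Proof.
case: K => [//|K] p0 n nK; rewrite deriv_texpS ![p^`() * _]mulrC.
apply: coefM_eql nK => i iK.
rewrite [in RHS]/texp big_ord_recr /= coefD coefZ (coef_expr_lt p0 iK).
by rewrite mulr0 addr0.
Qed.

Lemma coef0_texp K p : p`_0 = 0 -> (texp K p)`_0 = 1.
Proof.
move=> p0; rewrite /texp coef_sum big_ord_recl big1 => [|i _].
  by rewrite addr0 expr0 coefZ coef1 mulr1 invr1.
by rewrite coefZ (coef_expr_lt p0) ?mulr0.
Qed.

End ExpOde.

(* The i = 0 coefficient is 0 since 0%:R^-1 = 0. *)
Definition qlog (R : fieldType) K (Q c : R) : {poly R} :=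
  \poly_(i < K.+1) (c ^+ i / (Q ^+ i - 1) / i%:R).

Lemma coef_deriv_qlog (R : numFieldType) K (Q c : R) i : (i < K)%N ->
  (qlog K Q c)^`()`_i = c ^+ i.+1 / (Q ^+ i.+1 - 1).
Proof.
by move=> iK; rewrite coef_deriv coef_poly ltnS iK -[_ *+ _]mulr_natr divfK ?pnatr_eq0.
Qed.

Section QRecurrence.
Variables (R : numFieldType) (Q c : R) (e : nat -> R).
Hypothesis Q_nonroot : forall k, Q ^+ k.+1 != 1.
Hypothesis e_rec : forall n, (Q ^+ n.+1 - 1) * e n.+1 = c * Q ^+ n * e n.

Lemma qrec_conv n : \sum_(i < n.+1) c ^+ i.+1 * e (n - i) = c * Q ^+ n * e n.
Proof.
elim: n => [|n IH]; first by rewrite big_ord1 expr1 expr0 mulr1.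
rewrite big_ord_recl /= subn0.
under eq_bigr do rewrite subSS exprS -mulrA.
by rewrite -mulr_sumr IH -e_rec; ring.
Qed.

Lemma qrec_deriv n :
  e n *+ n = \sum_(i < n) c ^+ i.+1 / (Q ^+ i.+1 - 1) * e (n - i.+1).
Proof.
have QS1 k : Q ^+ k.+1 - 1 != 0 by rewrite subr_eq0.
(* Q^(n+1) - 1 = Q^(i+1) (Q^(n-i) - 1) + (Q^(i+1) - 1). *)
have split_term (u v d x : R) : u - 1 != 0 ->
    (u * v - 1) * (d / (u - 1) * x) = d / (u - 1) * u * ((v - 1) * x) + d * x.
  by move=> u1; field.
elim: n => [|n IH]; first by rewrite big_ord0 mulr0n.
apply: (mulfI (QS1 n)); rewrite mulrnAr e_rec mulr_sumr.
under eq_bigr => i _.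
  rewrite -[in Q ^+ n.+1](subnKC (ltn_ord i)) exprD subSS split_term //.
  over.
rewrite big_split /= qrec_conv big_ord_recr /= subnn expr0 subrr !mul0r mulr0 addr0.
have regroup (d u v x : R) : d * u * (c * v * x) = c * (u * v) * (d * x) by ring.
under eq_bigr => i _.
  rewrite -(subnSK (ltn_ord i)) e_rec regroup -exprD subnKC //.
  over.
by rewrite -mulr_sumr -IH mulrnAr mulrSr.
Qed.

Lemma exp_ode_qrec K : exp_ode K (qlog K Q c) (\poly_(j < K.+1) e j).
Proof.
move=> n nK; rewrite coef_deriv coef_poly ltnS nK qrec_deriv coefM.
apply: eq_bigr => i _; have := ltn_ord i; rewrite ltnS => ni.
by rewrite subSS coef_deriv_qlog ?coef_poly ?ifT //; lia.
Qed.

End QRecurrence.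

Lemma qpoch0 Q : qpoch Q 0 = 1.
Proof. by rewrite /qpoch big_geq. Qed.

Lemma qpochS Q n : qpoch Q n.+1 = qpoch Q n * (1 - Q ^+ n.+1).
Proof. by rewrite /qpoch big_nat_recr. Qed.

Definition qexp_coef (Q c : algC) n := (-1) ^+ n * c ^+ n * Q ^+ 'C(n, 2) / qpoch Q n.
Definition qexp_inv_coef (Q c : algC) n := c ^+ n / qpoch Q n.

Section QExponential.
Variable Q : algC.
Hypothesis Q_neq0 : Q != 0.
Hypothesis Q_nonroot : forall k, Q ^+ k.+1 != 1.

Lemma qpoch_neq0 n : qpoch Q n != 0.
Proof.
elim: n => [|n IH]; first by rewrite qpoch0 oner_neq0.
by rewrite qpochS mulf_neq0 // subr_eq0 eq_sym.
Qed.

Lemma qexp_coef_rec c n :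
  (Q ^+ n.+1 - 1) * qexp_coef Q c n.+1 = c * Q ^+ n * qexp_coef Q c n.
Proof.
have := Q_nonroot n; rewrite /qexp_coef qpochS binS bin1 exprD !exprS => Qn1.
by field; rewrite qpoch_neq0 subr_eq0 eq_sym.
Qed.

Lemma qexp_inv_coef_rec c n :
  (Q^-1 ^+ n.+1 - 1) * qexp_inv_coef Q c n.+1 = c / Q * Q^-1 ^+ n * qexp_inv_coef Q c n.
Proof.
have := Q_nonroot n; rewrite /qexp_inv_coef qpochS !exprVn !exprS => Qn1.
by field; rewrite qpoch_neq0 expf_neq0 // Q_neq0 subr_eq0 eq_sym.
Qed.

Lemma qlog_inv K c : qlog K Q^-1 (c / Q) = - qlog K Q c.
Proof.
apply/polyP => -[|i]; rewrite coefN !coef_poly.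
  by rewrite !mulr0n !invr0 !mulr0 oppr0.
case: ifP => _; rewrite ?oppr0 //.
have := Q_nonroot i; rewrite exprVn expr_div_n => Qi1.
by field; rewrite nat1r pnatr_eq0 mulN1r !subr_eq0 [1 == _]eq_sym Qi1 expf_neq0.
Qed.

Lemma exp_ode_qexp K c : exp_ode K (qlog K Q c) (\poly_(j < K.+1) qexp_coef Q c j).
Proof. exact/exp_ode_qrec/qexp_coef_rec. Qed.

Lemma exp_ode_qexp_inv K c :
  exp_ode K (- qlog K Q c) (\poly_(j < K.+1) qexp_inv_coef Q c j).
Proof.
rewrite -qlog_inv; apply/exp_ode_qrec/qexp_inv_coef_rec => k.
by rewrite exprVn invr_eq1.
Qed.

End QExponential.

Section Factorisation.
Variables (g : nat) (Q : algC) (alpha beta : 'I_g -> algC).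
Hypothesis Q_neq0 : Q != 0.
Hypothesis Q_nonroot : forall k, Q ^+ k.+1 != 1.

(* Index (0, +/-) carries the factor with base Q resp. 1, index (l+1, +/-)
   the one with base alpha l resp. beta l, matching [bterm]. *)
Definition factor_base (x : 'I_g.+1 * bool) : algC :=
  if unlift ord0 x.1 is Some l then (if x.2 then alpha l else beta l)
  else (if x.2 then Q else 1).

Definition factor_log K (x : 'I_g.+1 * bool) : {poly algC} :=
  if unlift ord0 x.1 is Some _ then - qlog K Q (factor_base x) else qlog K Q (factor_base x).

Definition factor_coef (x : 'I_g.+1 * bool) : nat -> algC :=
  if unlift ord0 x.1 is Some _ then qexp_inv_coef Q (factor_base x)
  else qexp_coef Q (factor_base x).

Lemma exp_ode_factor K x : exp_ode K (factor_log K x) (\poly_(j < K.+1) factor_coef x j).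
Proof.
rewrite /factor_log /factor_coef; case: unlift => [_|].
  exact: exp_ode_qexp_inv.
exact: exp_ode_qexp.
Qed.

Lemma exp_arg_qlog K : exp_arg Q alpha beta K =
  qlog K Q Q + qlog K Q 1 - \sum_(l < g) (qlog K Q (alpha l) + qlog K Q (beta l)).
Proof.
pose a i := Nk Q alpha beta i / (Q ^+ i - 1) / i%:R.
have -> : exp_arg Q alpha beta K = \poly_(i < K.+1) a i.
  rewrite poly_def -(big_mkord xpredT (fun i => a i *: 'X^i)) big_ltn //.
  by rewrite /a expr0 subrr invr0 !mulr0 scale0r add0r.
apply/polyP => i; rewrite coefB coefD coef_sum !coef_poly.
under eq_bigr do rewrite coefD !coef_poly.
case: ifP => _; last by rewrite big1 ?subr0 ?addr0.
rewrite /a /Nk expr1n -!mulrA mulrBl mulrDl mul1r mulr_suml.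
by congr (_ - _); apply: eq_bigr => l _; rewrite -!mulrA mulrDl.
Qed.

Lemma sum_factor_log K : \sum_x factor_log K x = exp_arg Q alpha beta K.
Proof.
rewrite exp_arg_qlog big_pair_bool big_ord_recl /factor_log /factor_base /= unlift_none.
by under eq_bigr do rewrite liftK -opprD; rewrite sumrN.
Qed.

Lemma prod_factor_coef K (f : {ffun 'I_g.+1 * bool -> 'I_K.+1}) :
  \prod_x factor_coef x (f x) = bterm Q alpha beta f.
Proof.
rewrite big_pair_bool big_ord_recl /factor_coef /factor_base /= unlift_none.
under eq_bigr do rewrite liftK.
rewrite /bterm /qexp_coef /qexp_inv_coef; congr (_ * _).
  by rewrite addn1 binS bin1 !exprD expr1n invfM; ring.
by apply: eq_bigr => l _; rewrite invfM; ring.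
Qed.

Lemma bcoef_eq_bsum K : bcoef Q alpha beta K = bsum Q alpha beta K.
Proof.
pose F := \prod_x \poly_(j < K.+1) factor_coef x j.
have arg0 : (exp_arg Q alpha beta K)`_0 = 0.
  rewrite /exp_arg coef_sum big_nat big1 // => i /andP[i_gt0 _].
  by rewrite coefZ coefXn ltn_eqF ?mulr0.
have odeF : exp_ode K (exp_arg Q alpha beta K) F.
  by rewrite -sum_factor_log; apply: exp_ode_prod => x; apply: exp_ode_factor.
have F0 : F`_0 = 1.
  rewrite -horner_coef0 horner_prod big1 // => x _.
  rewrite horner_coef0 coef_poly /factor_coef /qexp_coef /qexp_inv_coef.
  by case: unlift; rewrite qpoch0 !expr0 ?mul1r invr1 ?mulr1.
rewrite /bsum -(eq_bigr _ (fun f _ => prod_factor_coef f)) -coef_prod_poly.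
change (bcoef Q alpha beta K) with (texp K (exp_arg Q alpha beta K))`_K.
by apply: (exp_ode_uniq (exp_ode_texp arg0) odeF); rewrite ?coef0_texp ?F0.
Qed.

End Factorisation.

Lemma expn_gt1 m n : (1 < m)%N -> (0 < n)%N -> (1 < m ^ n)%N.
Proof. by move=> m_gt1 n_gt0; apply: leq_ltn_trans n_gt0 (ltn_expl n m_gt1). Qed.

Theorem theorem3p3 (q g : nat) (ns : seq nat) (P : {poly algC})
    (alpha beta : 'I_g -> algC) (k : nat) :
  (exists p e : nat, [/\ prime p, (0 < e)%N & q = (p ^ e)%N]) ->
  (0 < size ns)%N -> all (fun n => 0 < n)%N ns ->
  size P = (2 * g).+1 ->
  P.[0] != 0 ->
  P = P.[0] *: \prod_(l < g) ((1 - alpha l *: 'X) * (1 - beta l *: 'X)) ->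
  let Q : algC := (q ^ (\prod_(n <- ns) n))%N%:R in
  bcoef Q alpha beta k = bsum Q alpha beta k.
Proof.
move=> [p [e [p_prime e_gt0 ->]]] _ ns_pos _ _ _ Q.
have N_gt0 : (0 < \prod_(n <- ns) n)%N.
  by rewrite big_seq prodn_cond_gt0 // => n /(allP ns_pos).
have Q_gt1 := expn_gt1 (expn_gt1 (prime_gt1 p_prime) e_gt0) N_gt0.
apply: bcoef_eq_bsum => [|j]; rewrite /Q.
  by rewrite pnatr_eq0 -lt0n ltnW.
by rewrite -natrX pnatr_eq1 gtn_eqF // expn_gt1.
Qed.
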